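(* Let $a\in(-1,0)$ and $\alpha\in\mathbb{R}$, and let $$P_1(x)=a x_1+x_2+\tfrac32 a x_1x_2+\tfrac32 x_2^2+\alpha x_1,\qquad P_2(x)=x_1+a x_2+a x_2^2 .$$ For every $\mathcal{T}\in\mathbb{R}^2$ such that the translated homoclinic orbit $\{x+\mathcal{T}:\ -x_1^2+x_2^2(1+x_2)=0,\ x_2<0\}$ is contained in $\mathbb{R}_{>}^2$, the translated polynomial map $\bar x\mapsto P(\bar x-\mathcal{T})$, considered on $\mathbb{R}_{\ge}^2$, is nonkinetic, i.e. it contains a cross-negative term.
   Context: $\mathbb{R}_{>}^2$ is the open positive quadrant. For a polynomial map $F=(F_1,F_2)$ written as a sum of monomials, a term of $F_s$ is cross-negative if it is a monomial with negative coefficient not containing the factor $\bar x_s$ (so it is negative at some nonnegative point with $\bar x_s=0$); $F$ is nonkinetic if it has at least one cross-negative term. *)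

From HB Require Import structures.
From mathcomp Require Import all_boot all_order all_algebra.
From mathcomp Require Import reals.
From mathcomp Require Import mpoly.
Set Implicit Arguments. Unset Strict Implicit. Unset Printing Implicit Defensive.
Import Order.TTheory GRing.Theory Num.Theory.
Local Open Scope ring_scope.

Definition i1 : 'I_2 := ord0.
Definition i2 : 'I_2 := ord_max.

Section Defs.
Variable R : realType.

Definition P1 (a alpha : R) : {mpoly R[2]} :=
  a *: 'X_i1 + 'X_i2 + (3 / 2 * a) *: ('X_i1 * 'X_i2)
  + (3 / 2) *: ('X_i2 ^+ 2) + alpha *: 'X_i1.

Definition P2 (a : R) : {mpoly R[2]} :=
  'X_i1 + a *: 'X_i2 + a *: ('X_i2 ^+ 2).

Definition P (a alpha : R) (s : 'I_2) : {mpoly R[2]} :=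
  if s == i1 then P1 a alpha else P2 a.

Definition translate (T : 'I_2 -> R) (p : {mpoly R[2]}) : {mpoly R[2]} :=
  comp_mpoly [tuple 'X_i - (T i)%:MP | i < 2] p.

Definition cross_negative (F : 'I_2 -> {mpoly R[2]}) (s : 'I_2)
    (m : 'X_{1..2}) : Prop :=
  (F s)@_m < 0 /\ m s = 0%N.

Definition nonkinetic (F : 'I_2 -> {mpoly R[2]}) : Prop :=
  exists s m, cross_negative F s m.

Definition homoclinic (x : 'I_2 -> R) : Prop :=
  - (x i1) ^+ 2 + (x i2) ^+ 2 * (1 + x i2) = 0 /\ x i2 < 0.

End Defs.

(* The sign of the constant term of the translated P_2 decides the matter: it is
   P_2(-T) = -T_1 + a T_2 (T_2 - 1), a cross-negative term of the second component.
   The homoclinic orbit is parametrised by ((s^2 - 1) s, s^2 - 1) for 0 < s < 1,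
   so its translate lies in the open quadrant only if T_1 > 0 and T_2 >= 1;
   since a < 0 the constant term is then negative. *)

From HB Require Import structures.
From mathcomp Require Import all_boot all_order all_algebra.
From mathcomp Require Import reals.
From mathcomp Require Import mpoly.
From mathcomp Require Import ring lra.
Import Order.TTheory GRing.Theory Num.Theory.
Local Open Scope ring_scope.

Lemma mcoeff0_comp_mpoly (n k : nat) (R : comNzRingType) (p : {mpoly R[k]})
    (lq : k.-tuple {mpoly R[n]}) :
  (p \mPo lq)@_0 = p.@[fun i => (tnth lq i)@_0].
Proof.
rewrite comp_mpolyEX mevalE raddf_sum /=.
apply: eq_bigr => m _; rewrite mcoeffZ comp_mpolyX rmorph_prod /=.
by congr (_ * _); apply: eq_bigr => i _; rewrite rmorphXn.
Qed.

Section Translate.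
Variable R : realType.
Implicit Types (T : 'I_2 -> R) (p : {mpoly R[2]}).

Lemma mcoeff0_translate T p : (translate T p)@_0 = p.@[fun i => - T i].
Proof.
rewrite mcoeff0_comp_mpoly; apply: meval_eq => i.
rewrite tnth_mktuple mcoeffB mcoeffX mcoeffC.
by rewrite -mdeg_eq0 mdeg1 eqxx mulr1 sub0r.
Qed.

Lemma mcoeff0_translate_P2 T (a : R) :
  (translate T (P2 a))@_0 = - T i1 + a * (T i2 * (T i2 - 1)).
Proof.
rewrite mcoeff0_translate /P2 !(mevalD, mevalZ) rmorphXn /= !mevalXU.
by ring.
Qed.

Definition orbit_point (s : R) (i : 'I_2) : R :=
  if i == i1 then (s ^+ 2 - 1) * s else s ^+ 2 - 1.

Lemma homoclinic_orbit_point {s : R} :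
  0 < s -> s < 1 -> homoclinic (orbit_point s).
Proof. by rewrite /homoclinic /orbit_point /= => s_gt0 s_lt1; split; [ring | nra]. Qed.

Lemma translation_bounds_of_orbit_in_quadrant T :
  (forall x, homoclinic x -> 0 < x i1 + T i1 /\ 0 < x i2 + T i2) ->
  0 < T i1 /\ 1 <= T i2.
Proof.
move=> inQ.
have inQs (s : R) : 0 < s -> s < 1 ->
    0 < (s ^+ 2 - 1) * s + T i1 /\ 0 < s ^+ 2 - 1 + T i2.
  by move=> s_gt0 s_lt1; have := inQ _ (homoclinic_orbit_point s_gt0 s_lt1).
have [T1_gt0 T2_gt0] := inQs (1 / 2) ltac:(lra) ltac:(lra).
split; first by nra.
rewrite leNgt; apply/negP => T2_lt1.
(* at s = 1 - T_2 the second coordinate of the translate is s^2 - s < 0 *)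
have [_] := inQs (1 - T i2) ltac:(lra) ltac:(lra).
by nra.
Qed.

End Translate.

Theorem lemma2 (R : realType) (a alpha : R) (T : 'I_2 -> R) :
  -1 < a -> a < 0 ->
  (forall x : 'I_2 -> R, homoclinic x ->
     0 < x i1 + T i1 /\ 0 < x i2 + T i2) ->
  nonkinetic (fun s => translate T (P a alpha s)).
Proof.
move=> _ a_lt0 /translation_bounds_of_orbit_in_quadrant [T1_gt0 T2_ge1].
exists i2, 0%MM; split; last by rewrite mnm0E.
rewrite /P /= mcoeff0_translate_P2.
have : 0 <= T i2 * (T i2 - 1) by nra.
by nra.
Qed.
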